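(* Let $X$ be a compact metric countable space and $f:X\to X$ a continuous function such that every accumulation point of $X$ is a fixed point of $f$. For every accumulation point $a$ of $X$, the following are equivalent: (1) there is $p\in\mathbb N^*$ such that $f^p$ is discontinuous at $a$; (2) there are a periodic point $b\in X\setminus\{a\}$ and a sequence $(a_n)_{n\in\mathbb N}$ in $X$ such that $a_n\to a$ and $b\in\overline{\mathcal O_f(a_n)}$ for all $n\in\mathbb N$; (3) $f^p$ is discontinuous at $a$ for every $p\in\mathbb N^*$.
   Context: $\mathbb N^*$ denotes the set of free ultrafilters on $\mathbb N$. For $p\in\mathbb N^*$ and a sequence $(x_n)$ in $X$, $x=p\text{-}\lim_{n\to\infty}x_n$ means that for every neighborhood $V$ of $x$, $\{n\in\mathbb N: x_n\in V\}\in p$. The $p$-iterate of $f$ is the function $f^p:X\to X$, $f^p(x)=p\text{-}\lim_{n\to\infty}f^n(x)$. The orbit of $x$ is $\mathcal O_f(x)=\{f^n(x):n\in\mathbb N\}$. A point $x$ is periodic if $f^n(x)=x$ for some $n\ge1$. An accumulation point of $X$ is a non-isolated point. *)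

From HB Require Import structures.
From mathcomp Require Import all_boot all_order all_algebra.
From mathcomp Require Import all_classical all_reals all_analysis.
Set Implicit Arguments. Unset Strict Implicit. Unset Printing Implicit Defensive.
Import Order.TTheory GRing.Theory Num.Theory.
Local Open Scope classical_set_scope.

Definition free_ultrafilter (p : set_system nat) : Prop :=
  UltraFilter p /\ (forall A : set nat, finite_set A -> ~ p A).

Section PIterate.
Variable X : topologicalType.

Definition is_plim (p : set_system nat) (x : nat -> X) (l : X) : Prop :=
  forall V : set X, nbhs l V -> p [set n | V (x n)].

(* The p-iterate f^p(x) = p-lim f^n(x) (a chosen p-limit; it exists and is
   unique in a compact Hausdorff space; the default x is never used there). *)
Definition piterate (f : X -> X) (p : set_system nat) (x : X) : X :=
  xget x [set l | is_plim p (fun n => iter n f x) l].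

Definition forbit (f : X -> X) (x : X) : set X := [set iter n f x | n in [set: nat]].

Definition periodic_point (f : X -> X) (x : X) : Prop :=
  exists n, (0 < n)%N /\ iter n f x = x.

Definition accumulation_point (x : X) : Prop := limit_point [set: X] x.
End PIterate.

From HB Require Import structures.
From mathcomp Require Import all_boot all_order all_algebra.
From mathcomp Require Import all_classical all_reals all_analysis.
From mathcomp.algebra_tactics Require Import ring lra.
Set Implicit Arguments. Unset Strict Implicit. Unset Printing Implicit Defensive.
Import Order.TTheory GRing.Theory Num.Theory.
Local Open Scope classical_set_scope.
Local Open Scope ring_scope.

(* As
   accumulation points are fixed, f^p(x) is fixed or isolated, and in the
   latter case the orbit visits it at p-many, hence at two, times: f^p(x) is
   periodic.
   As X is countable, only countably many spheres around a contain a point, so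
   there are arbitrarily small radii r with empty sphere and, by compactness,
   some d > 0 such that no step of length < d enters or leaves B(a, r).  Hence
   f moves by at least d the points where orbits leave B(a, r); these exit
   points accumulate at a point that is not fixed, hence isolated, so they hit
   it infinitely often.
   (1 -> 2) Discontinuity yields x_k -> a with f^p(x_k) outside B(a, r); the
   orbits of the x_k leave B(a, r), and for the repeated exit point w,
   b := f^p(w) is periodic, differs from a, and lies in the closure of the
   orbit of every x_k exiting at w.
   (2 -> 3) If f^p were continuous at a, some x with b in the closure of its
   orbit would have f^p(x) in B(a, r); its orbit would enter B(a, r) and leave
   it (near b, whose orbit avoids a ball around a) infinitely often.  Exiting
   twice at the same point, it is eventually periodic, so b and f^p(x) lie on
   one cycle: f^p(x) is on the orbit of b, outside B(a, r).
   (3 -> 1) Free ultrafilters exist. *)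

Section Iterates.
Variables (T : Type) (f : T -> T).

Lemma iter_periodM c N k : iter N f c = c -> iter (k * N) f c = c.
Proof. by move=> cN; elim: k => // k IHk; rewrite mulSn iterD IHk cN. Qed.

Lemma iter_period_mod c N m : iter N f c = c -> iter m f c = iter (m %% N) f c.
Proof. by move=> cN; rewrite {1}(divn_eq m N) addnC iterD iter_periodM. Qed.

Lemma iter_period_return c N m : (0 < N)%N -> iter N f c = c ->
  iter (N * m - m) f (iter m f c) = c.
Proof.
move=> N_gt0 cN; rewrite -iterD subnK; last by rewrite leq_pmull.
by rewrite mulnC iter_periodM.
Qed.

End Iterates.

Lemma exit_index (P : nat -> Prop) n m : P n -> ~ P m -> (n <= m)%N ->
  exists2 k, (n <= k)%N & P k /\ ~ P k.+1.
Proof.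
move=> Pn; elim: m => [|m IHm] nPm.
  by rewrite leqn0 => /eqP n0; rewrite n0 in Pn.
rewrite leq_eqVlt => /orP[/eqP nm|]; first by rewrite nm in Pn.
rewrite ltnS => nm; have [Pm|nPm'] := pselect (P m); first by exists m.
exact: IHm.
Qed.

Lemma ultra_fmap (T U : Type) (g : T -> U) (F : set_system T) :
  UltraFilter F -> UltraFilter (g @ F).
Proof.
move=> Fultra; split; first exact: fmap_proper_filter.
move=> G Gproper gFG; apply/seteqP; split => [A GA|]; last exact: gFG.
have [//|FnA] := in_ultra_setVsetC (g @^-1` A) Fultra.
have GnA : G (~` A) by exact: gFG.
by have /filter_ex[? []] : G (A `&` ~` A) by exact: filterI.
Qed.

Lemma free_ultrafilter_ge p i : free_ultrafilter p -> p [set n | (i <= n)%N].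
Proof.
move=> [pultra pfree]; have [//|pnge] := in_ultra_setVsetC [set n | (i <= n)%N] pultra.
exfalso; apply: (pfree `I_i (finite_II i)); apply: filterS pnge.
by move=> n /= /negP; rewrite -ltnNge.
Qed.

Lemma free_ultrafilter_exists : exists p : set_system nat, free_ultrafilter p.
Proof.
have [p [pultra evp]] := ultraFilterLemma eventually_filter.
exists p; split => // A /finite_fsetP[s ->] pA.
pose N := (\max_(k <- finmap.enum_fset s) k).+1.
have /(filterI pA)/filter_ex[n [/= sn Nn]] : p [set n | (N <= n)%N].
  by apply: evp; exists N.
have : (n <= \max_(k <- finmap.enum_fset s) k)%N.
  by apply: (@leq_bigmax_seq _ _ xpredT id n).
by rewrite leqNgt Nn.
Qed.

Section Orbits.
Variables (X : topologicalType) (f : X -> X).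

Lemma forbit_iter x m : forbit f x (iter m f x).
Proof. by exists m. Qed.

Lemma forbit_sub x y : forbit f x y -> forbit f y `<=` forbit f x.
Proof. by move=> [m _ <-] _ [n _ <-]; exists (n + m)%N => //; rewrite iterD. Qed.

Lemma iter_eq_periodic x i j : (i < j)%N -> iter i f x = iter j f x ->
  periodic_point f (iter i f x).
Proof.
move=> ij xij; exists (j - i)%N; split; first by rewrite subn_gt0.
by rewrite -iterD subnK ?xij // ltnW.
Qed.

Lemma periodic_forbit_sym c y : periodic_point f c -> forbit f c y -> forbit f y c.
Proof.
move=> [N [N_gt0 cN]] [m _ <-]; exists (N * m - m)%N => //.
exact: iter_period_return.
Qed.

Lemma periodic_forbit_fixed a c :
  f a = a -> periodic_point f c -> forbit f c a -> c = a.
Proof. by move=> fa cper /(periodic_forbit_sym cper)[m _ <-]; rewrite iter_fix. Qed.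

Lemma closed_periodic_forbit c : hausdorff_space X -> periodic_point f c ->
  closed (forbit f c).
Proof.
move=> Xhaus [N [N_gt0 cN]].
have -> : forbit f c = \bigcup_(i in `I_N) [set iter i f c].
  apply/seteqP; split => [_ [m _ <-]|_ [i _ ->]]; last by exists i.
  by exists (m %% N)%N; [rewrite /= ltn_pmod | exact: iter_period_mod].
apply: closed_bigcup => [|i _]; first exact: finite_II.
exact: accessible_closed_set1 (hausdorff_accessible Xhaus) _.
Qed.

Lemma closure_periodic_forbit c : hausdorff_space X -> periodic_point f c ->
  closure (forbit f c) = forbit f c.
Proof. by move=> Xhaus cper; apply/esym/closure_id; exact: closed_periodic_forbit. Qed.

Lemma iter_continuous m : continuous f -> continuous (iter m f).
Proof.
move=> f_cont; elim: m => [|m IHm] x /=; first exact: cvg_id.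
exact: continuous_comp (IHm x) (f_cont _).
Qed.

Lemma closure_forbit_iter x y m : continuous f -> closure (forbit f x) y ->
  closure (forbit f (iter m f x)) (iter m f y).
Proof.
move=> f_cont xy B By.
have [_ [[n _ <-] Bn]] := xy _ (iter_continuous (m := m) f_cont By).
exists (iter n f (iter m f x)); split; first exact: forbit_iter.
by rewrite -iterD addnC iterD.
Qed.

Lemma closure_forbit_tail x b n : continuous f -> periodic_point f b ->
  closure (forbit f x) b -> closure (forbit f (iter n f x)) b.
Proof.
move=> f_cont [N [N_gt0 bN]] xb.
have := closure_forbit_iter (m := (n * N)%N) f_cont xb; rewrite (iter_periodM n bN).
apply: closureS; apply: forbit_sub.
by exists (n * N - n)%N => //; rewrite -iterD subnK // leq_pmulr.
Qed.

End Orbits.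

Section PLimits.
Variable X : topologicalType.

Lemma compact_seq_cluster (s : nat -> X) : compact [set: X] ->
  exists w : X, forall V, nbhs w V -> forall N, exists2 k, (N <= k)%N & V (s k).
Proof.
move=> Xcompact; have [w [_ sw]] := Xcompact (s @ \oo) _ filterT.
exists w => V Vw N.
have /(sw _ V)/(_ Vw)[_ [[k Nk <-] Vk]] : (s @ \oo) (s @` [set k | (N <= k)%N]).
  by exists N => // k /= Nk; exists k.
by exists k.
Qed.

Lemma plim_exists p (s : nat -> X) : UltraFilter p -> compact [set: X] ->
  exists l, is_plim p s l.
Proof.
move=> pultra; rewrite compact_ultra => /(_ _ (ultra_fmap s pultra) filterT).
by move=> [l [_ sl]]; exists l.
Qed.

Lemma plim_unique p (s : nat -> X) l1 l2 : hausdorff_space X -> ProperFilter p ->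
  is_plim p s l1 -> is_plim p s l2 -> l1 = l2.
Proof. by move=> Xhaus pproper; apply: (cvg_unique Xhaus (F := s @ p)). Qed.

Lemma plim_closure p (s : nat -> X) l (A : set X) : ProperFilter p ->
  is_plim p s l -> p [set n | A (s n)] -> closure A l.
Proof.
move=> pproper sl pA B Bl.
by have [n [/= An Bn]] := filter_ex (filterI pA (sl _ Bl)); exists (s n).
Qed.

Lemma plim_continuous p (s : nat -> X) l (g : X -> X) :
  is_plim p s l -> {for l, continuous g} -> is_plim p (g \o s) (g l).
Proof. by move=> sl gl V Vg; exact: sl _ (gl _ Vg). Qed.

Variables (f : X -> X) (p : set_system nat).

Lemma piterateP x : UltraFilter p -> compact [set: X] ->
  is_plim p (fun n => iter n f x) (piterate f p x).
Proof.
by move=> pultra Xcompact; apply: xgetPex; exact: plim_exists _ pultra Xcompact.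
Qed.

Lemma piterate_closure_forbit x i : free_ultrafilter p -> compact [set: X] ->
  closure (forbit f (iter i f x)) (piterate f p x).
Proof.
move=> pfree Xcompact; have [pultra _] := pfree.
apply: (plim_closure (@ultra_proper _ _ pultra) (piterateP (x := x) pultra Xcompact)).
apply: filterS (free_ultrafilter_ge i pfree) => n /= ni.
by exists (n - i)%N => //; rewrite -iterD subnK.
Qed.

Lemma piterate_iter x m : hausdorff_space X -> compact [set: X] -> continuous f ->
  UltraFilter p -> piterate f p (iter m f x) = iter m f (piterate f p x).
Proof.
move=> Xhaus Xcompact f_cont pultra.
apply: (plim_unique Xhaus (@ultra_proper _ _ pultra) (piterateP pultra Xcompact)).
have -> : (fun n => iter n f (iter m f x)) = iter m f \o (fun n => iter n f x).
  by apply: funext => n /=; rewrite -!iterD addnC.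
exact: plim_continuous (piterateP (x := x) pultra Xcompact)
  (@iter_continuous _ f m f_cont _).
Qed.

Lemma piterate_fixed a : hausdorff_space X -> compact [set: X] -> UltraFilter p ->
  f a = a -> piterate f p a = a.
Proof.
move=> Xhaus Xcompact pultra fa.
apply: (plim_unique Xhaus (@ultra_proper _ _ pultra) (piterateP pultra Xcompact)).
move=> V /nbhs_singleton Va; apply: filterS filterT => n _ /=.
by rewrite iter_fix.
Qed.

Lemma piterate_periodic x : compact [set: X] ->
  (forall y, accumulation_point y -> f y = y) -> free_ultrafilter p ->
  periodic_point f (piterate f p x).
Proof.
move=> Xcompact acc_fixed pfree; have [pultra _] := pfree.
set c := piterate f p x.
have [/acc_fixed fc|] := pselect (accumulation_point c).
  by exists 1%N; split => //=.
rewrite /accumulation_point not_limit_pointE => -[V Vc Vsub].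
have pc : p [set n | iter n f x = c].
  by apply: filterS (piterateP (x := x) pultra Xcompact Vc) => n /= Vn; apply: Vsub.
have [n1 /= n1c] := filter_ex pc.
have [n2 [/= n2c n12]] := filter_ex (filterI pc (free_ultrafilter_ge n1.+1 pfree)).
by rewrite -n1c; apply: (iter_eq_periodic n12); rewrite n1c n2c.
Qed.

End PLimits.

Section BallGap.
Variables (R : realType) (X : pseudoMetricType R).

Lemma not_continuous_ball (Y : pseudoMetricType R) (g : X -> Y) a :
  ~ {for a, continuous g} -> exists2 eps, 0 < eps &
    forall eta, 0 < eta -> exists x, ball a eta x /\ ~ ball (g a) eps (g x).
Proof.
move=> gdisc; apply: contrapT => no_eps; apply: gdisc; apply/cvg_ballP => e e_gt0.
apply/nbhs_ballP; apply: contrapT => no_eta; apply: no_eps; exists e => // eta eta_gt0.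
apply: contrapT => no_x; apply: no_eta; exists eta => // x ax.
by apply: contrapT => gx_far; apply: no_x; exists x.
Qed.

Lemma cvg_ball_natSinv (u : nat -> X) a :
  (forall n, ball a n.+1%:R^-1 (u n)) -> u @ \oo --> a.
Proof.
move=> ua; apply/cvg_ballP => e e_gt0.
have [N _ Ne] := near_infty_natSinv_lt (PosNum e_gt0).
by exists N => // n /= Nn; apply: (le_ball _ (ua n)); exact: ltW (Ne _ Nn).
Qed.

Lemma closed_ball_avoid (A : set X) a : closed A -> ~ A a ->
  exists2 e, 0 < e & forall y, A y -> ~ ball a e y.
Proof.
move=> Acl nAa.
have /nbhs_ballP[e e_gt0 aeA] : nbhs a (~` A).
  by apply: open_nbhs_nbhs; split; [rewrite openC|].
by exists e => // y Ay aey; exact: aeA y aey Ay.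
Qed.

Definition step_closed (A : set X) (d : R) := forall y z, A y -> ball y d z -> A z.

Lemma step_closedC A d : step_closed A d -> step_closed (~` A) d.
Proof. by move=> Ad y z nAy yz Az; exact: nAy (Ad z y Az (ball_sym yz)). Qed.

(* d(a, y) = r, phrased with balls since a pseudometric type has no distance
   function. *)
Definition on_sphere (a : X) (r : R) (y : X) :=
  forall e, 0 < e -> ball a (r + e) y /\ ~ ball a (r - e) y.

Lemma on_sphere_unique a y r1 r2 : on_sphere a r1 y -> on_sphere a r2 y -> r1 = r2.
Proof.
suff le_sphere s1 s2 : on_sphere a s1 y -> on_sphere a s2 y -> s1 <= s2.
  by move=> y1 y2; apply/eqP; rewrite eq_le (le_sphere _ _ y1 y2) (le_sphere _ _ y2 y1).
move=> y1 y2; rewrite leNgt; apply/negP => s21.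
have e_gt0 : 0 < (s1 - s2) / 2 by rewrite divr_gt0 // subr_gt0.
have [_] := y1 _ e_gt0; apply.
have -> : s1 - (s1 - s2) / 2 = s2 + (s1 - s2) / 2 by field.
by have [] := y2 _ e_gt0.
Qed.

Lemma countable_sphere_radii a : countable [set: X] ->
  countable [set r | exists y, on_sphere a r y].
Proof.
move=> Xcount; pose radius y := xget 0 [set r | on_sphere a r y].
apply: (sub_countable (B := radius @` [set: X])); last first.
  exact: sub_countable (card_image_le _ _) Xcount.
apply: subset_card_le => r [y ry]; exists y => //.
have ry' : on_sphere a (radius y) y :=
  xgetPex 0 (P := [set r | on_sphere a r y]) (ex_intro _ r ry).
exact: on_sphere_unique ry' ry.
Qed.

Lemma ball_gap a r : compact [set: X] -> (forall y, ~ on_sphere a r y) ->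
  exists2 d, 0 < d & ball a (r + d) `<=` ball a (r - d).
Proof.
move=> Xcompact nosphere; apply: contrapT => nogap.
have /choice[s shell] : forall k, exists y,
    ball a (r + k.+1%:R^-1) y /\ ~ ball a (r - k.+1%:R^-1) y.
  move=> k; apply: contrapT => noshell; apply: nogap.
  exists k.+1%:R^-1; first by rewrite invr_gt0.
  by move=> y y1; apply: contrapT => y2; apply: noshell; exists y.
have [w wcl] := compact_seq_cluster s Xcompact.
have [e e_gt0 we] : exists2 e, 0 < e & (ball a (r + e) w -> ball a (r - e) w).
  apply: contrapT => nowe; apply: (nosphere w) => e e_gt0.
  by apply/not_implyP => we; apply: nowe; exists e.
have e3_gt0 : 0 < e / 3 by rewrite divr_gt0.
have [N _ Ne] := near_infty_natSinv_lt (PosNum e3_gt0).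
have [k Nk wsk] := wcl _ (nbhsx_ballx w _ e3_gt0) N.
have k_lt : k.+1%:R^-1 < e / 3 := Ne k Nk.
have [ask] := shell k; apply.
move: k_lt ask; set t := k.+1%:R^-1 => k_lt ask.
have awe : ball a (r + e) w.
  by apply: (le_ball _ (ball_triangle ask (ball_sym wsk))); lra.
apply: (le_ball _ (ball_triangle (we awe) wsk)); lra.
Qed.

End BallGap.

Lemma exists_notin_countable_itv (R : realType) (B : set R) (rho : R) :
  0 < rho -> countable B -> exists r, [/\ 0 < r, r < rho & ~ B r].
Proof.
move=> rho_gt0 Bcount; apply: contrapT => noR.
have itvB : [set` Interval (BRight 0) (BLeft rho)] `<=` B.
  move=> r /=; rewrite in_itv /= => /andP[r_gt0 r_lt].
  by apply: contrapT => nBr; apply: noR; exists r.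
have := countable_lebesgue_measure0 (sub_countable (subset_card_le itvB) Bcount).
rewrite lebesgue_measure_itv /= lte_fin rho_gt0 oppr0 adde0 => -[] /eqP.
by rewrite gt_eqF.
Qed.

Lemma countable_ball_gap (R : realType) (X : pseudoMetricType R) (a : X) rho :
  countable [set: X] -> compact [set: X] -> 0 < rho ->
  exists r d, [/\ 0 < r, r < rho, 0 < d & step_closed (ball a r) d].
Proof.
move=> Xcount Xcompact rho_gt0.
have [r [r_gt0 r_lt nosphere]] :=
  exists_notin_countable_itv rho_gt0 (countable_sphere_radii a Xcount).
have [d d_gt0 gap] : exists2 d, 0 < d & ball a (r + d) `<=` ball a (r - d).
  by apply: ball_gap => // y ry; apply: nosphere; exists y.
exists r, d; split => // y z ay yz.
apply: (le_ball _ (gap _ (ball_triangle ay yz))); lra.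
Qed.

Section PIterateDiscontinuity.
Variables (R : realType) (X : pseudoMetricType R) (f : X -> X).
Hypotheses (Xhaus : hausdorff_space X) (Xcompact : compact [set: X])
  (Xcount : countable [set: X]) (f_cont : continuous f)
  (acc_fixed : forall x : X, accumulation_point x -> f x = x).

Lemma displaced_cluster (s : nat -> X) d : 0 < d ->
  (forall k, ~ ball (s k) d (f (s k))) ->
  exists w, forall N, exists k, (N <= k)%N /\ s k = w.
Proof.
move=> d_gt0 sd; have [w wcl] := compact_seq_cluster s Xcompact.
have fw : f w <> w.
  move=> fww; have d2_gt0 : 0 < d / 2 by rewrite divr_gt0.
  have Vw : nbhs w (ball w (d / 2) `&` f @^-1` ball (f w) (d / 2)).
    apply: filterI; first exact: nbhsx_ballx.
    exact: f_cont w _ (nbhsx_ballx _ _ d2_gt0).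
  have [k _ [wk fwk]] := wcl _ Vw 0%N; rewrite fww in fwk.
  apply: (sd k); apply: (le_ball _ (ball_triangle (ball_sym wk) fwk)); lra.
have [V Vw Vsub] : exists2 V, nbhs w V & [set: X] `&` V `<=` [set w].
  by rewrite -not_limit_pointE => /acc_fixed.
exists w => N; have [k Nk Vk] := wcl _ Vw N.
by exists k; split => //; apply: Vsub.
Qed.

Lemma exit_cluster a r d (s : nat -> X) : 0 < d -> step_closed (ball a r) d ->
  (forall k, ball a r (s k) /\ ~ ball a r (f (s k))) ->
  exists w, forall N, exists k, (N <= k)%N /\ s k = w.
Proof.
move=> d_gt0 rd sexit; apply: (displaced_cluster d_gt0) => k sfs.
by have [ask] := sexit k; apply; exact: rd _ _ ask sfs.
Qed.

Lemma orbit_exit a r d x n z : 0 < d -> step_closed (ball a r) d ->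
  ball a r (iter n f x) -> closure (forbit f (iter n f x)) z -> ~ ball a r z ->
  exists2 m, (n <= m)%N & ball a r (iter m f x) /\ ~ ball a r (iter m.+1 f x).
Proof.
move=> d_gt0 rd xn xz az.
have [_ [[m _ <-] zm]] := xz _ (nbhsx_ballx z _ d_gt0).
have out : ~ ball a r (iter (m + n) f x).
  by rewrite iterD; exact: (step_closedC rd) _ _ az zm.
exact: (exit_index (P := fun k => ball a r (iter k f x))) xn out (leq_addl m n).
Qed.

Lemma discontinuous_piterate_periodic_cluster a p : f a = a -> free_ultrafilter p ->
  ~ {for a, continuous (piterate f p)} ->
  exists b, periodic_point f b /\ b <> a /\
    exists u : nat -> X, u @ \oo --> a /\ forall n, closure (forbit f (u n)) b.
Proof.
move=> fa pfree gdisc; have [pultra _] := pfree; set g := piterate f p in gdisc *.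
have ga : g a = a by exact: piterate_fixed Xhaus Xcompact pultra fa.
have [eps eps_gt0] := not_continuous_ball gdisc; rewrite ga => jump.
have [r [d [r_gt0 r_lt d_gt0 rd]]] := countable_ball_gap a Xcount Xcompact eps_gt0.
have /choice[x xP] : forall k, exists y,
    ball a (Num.min r k.+1%:R^-1) y /\ ~ ball a eps (g y).
  by move=> k; apply: jump; rewrite lt_min r_gt0 invr_gt0 ltr0n.
have gx_out k : ~ ball a r (g (x k)).
  by have [_ ngx] := xP k; apply: contra_not ngx; apply: le_ball; exact: ltW.
have /choice[h hP] : forall k, exists n,
    ball a r (iter n f (x k)) /\ ~ ball a r (iter n.+1 f (x k)).
  move=> k; have [xk _] := xP k.
  have xk' : ball a r (iter 0 f (x k)) by apply: le_ball xk; rewrite ge_min lexx.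
  have [m _ xm] :=
    orbit_exit d_gt0 rd xk' (piterate_closure_forbit 0 pfree Xcompact) (gx_out k).
  by exists m.
have [w /choice[kk kkP]] := exit_cluster (s := fun k => iter (h k) f (x k)) d_gt0 rd hP.
exists (g w); split; first exact: piterate_periodic _ Xcompact acc_fixed pfree.
split.
  have [_ wk] := kkP 0%N; set k := kk 0%N in wk *.
  rewrite -wk /g piterate_iter // => gwa.
  apply: (gx_out k); suff -> : g (x k) = a by exact: ballxx.
  apply: (periodic_forbit_fixed fa (piterate_periodic (x k) Xcompact acc_fixed pfree)).
  by rewrite -gwa; exact: forbit_iter.
exists (fun N => x (kk N)); split.
  apply: cvg_ball_natSinv => N; have [kkN _] := kkP N; have [xk _] := xP (kk N).
  by apply: le_ball xk; rewrite ge_min lef_pV2 ?posrE ?ltr0n // ler_nat ltnS kkN orbT.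
move=> N; have [_ wN] := kkP N.
apply: (closureS _ (piterate_closure_forbit (x := w) 0 pfree Xcompact)).
by apply: forbit_sub; rewrite -wN; exact: forbit_iter.
Qed.

Lemma periodic_cluster_discontinuous a b (u : nat -> X) p :
  f a = a -> periodic_point f b -> b <> a -> u @ \oo --> a ->
  (forall n, closure (forbit f (u n)) b) -> free_ultrafilter p ->
  ~ {for a, continuous (piterate f p)}.
Proof.
move=> fa bper ba ua ub pfree gcont; have [pultra _] := pfree.
set g := piterate f p in gcont.
have ga : g a = a by exact: piterate_fixed Xhaus Xcompact pultra fa.
have [rho rho_gt0 b_far] :
    exists2 rho, 0 < rho & forall y, forbit f b y -> ~ ball a rho y.
  apply: closed_ball_avoid (closed_periodic_forbit Xhaus bper) _.
  by move=> /(periodic_forbit_fixed fa bper).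
have [r [d [r_gt0 r_lt d_gt0 rd]]] := countable_ball_gap a Xcount Xcompact rho_gt0.
have b_out y : forbit f b y -> ~ ball a r y.
  by move=> /b_far; apply: contra_not; apply: le_ball; exact: ltW.
have b_out_b : ~ ball a r b := b_out b (forbit_iter f b 0).
have [x xb gx] : exists2 x, closure (forbit f x) b & ball a r (g x).
  move: (cvg_comp _ _ ua gcont) => /cvg_ballP/(_ r r_gt0)[N _ guN].
  by exists (u N) => //; rewrite -ga; exact: guN N (leqnn N).
have /choice[h hP] : forall k, exists n,
    (k <= n)%N /\ ball a r (iter n f x) /\ ~ ball a r (iter n.+1 f x).
  move=> k; have gxd : nbhs (g x) (ball a r).
    by apply/nbhs_ballP; exists d => // z; exact: rd _ _ gx.
  have [n [/= xn kn]] :=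
    filter_ex (filterI (piterateP (x := x) pultra Xcompact gxd)
                       (free_ultrafilter_ge k pfree)).
  have [m nm xm] :=
    orbit_exit d_gt0 rd xn (closure_forbit_tail n f_cont bper xb) b_out_b.
  by exists m; split => //; exact: leq_trans kn nm.
have [w wP] :=
  exit_cluster d_gt0 rd (s := fun k => iter (h k) f x) (fun k => (hP k).2).
have [i [j [ij xi xj]]] : exists i j, [/\ (i < j)%N, iter i f x = w & iter j f x = w].
  have [k1 [_ x1]] := wP 0%N; have [k2 [k12 x2]] := wP (h k1).+1.
  by exists (h k1), (h k2); split => //; exact: leq_trans k12 (hP k2).1.
have wper : periodic_point f w.
  by rewrite -xi; exact: iter_eq_periodic ij (etrans xi (esym xj)).
have bw : forbit f w b.
  rewrite -(closure_periodic_forbit Xhaus wper) -xi.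
  exact: closure_forbit_tail i f_cont bper xb.
have gxw : forbit f w (g x).
  rewrite -(closure_periodic_forbit Xhaus wper) -xi.
  exact: piterate_closure_forbit i pfree Xcompact.
apply: (b_out (g x) _ gx).
exact: forbit_sub (periodic_forbit_sym wper bw) _ gxw.
Qed.

End PIterateDiscontinuity.

Unset Implicit Arguments.
Set Strict Implicit.

Theorem theorem3p5 (R : realType) (X : pseudoMetricType R) (f : X -> X) :
  hausdorff_space X -> compact [set: X] -> countable [set: X] ->
  continuous f ->
  (forall x : X, accumulation_point x -> f x = x) ->
  forall a : X, accumulation_point a ->
  [<-> (exists p, free_ultrafilter p /\ ~ {for a, continuous (piterate f p)});
       (exists b : X, periodic_point f b /\ b <> a /\
          exists u : nat -> X, u @ \oo --> a /\
            forall n, closure (forbit f (u n)) b);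
       (forall p, free_ultrafilter p -> ~ {for a, continuous (piterate f p)})].
Proof.
move=> Xhaus Xcompact Xcount f_cont acc_fixed a a_acc.
have fa : f a = a := acc_fixed a a_acc.
tfae.
- move=> [p [pfree gdisc]].
  exact (discontinuous_piterate_periodic_cluster
           Xhaus Xcompact Xcount f_cont acc_fixed fa pfree gdisc).
- move=> [b [bper [ba [u [ua ub]]]]] p pfree.
  exact (periodic_cluster_discontinuous
           Xhaus Xcompact Xcount f_cont acc_fixed fa bper ba ua ub pfree).
- move=> gdisc; have [p pfree] := free_ultrafilter_exists.
  by exists p; split => //; exact: gdisc.
Qed.
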